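(* Let $n\ge1$ and let $(\phi_1^k,\phi_2^k)\in\vec{\mathcal C}^{\mathcal G}_{\rm per}$, $k=n-1,n,n+1$, with $\overline{\phi_i^{n-1}}=\overline{\phi_i^{n}}=\overline{\phi_i^{n+1}}$ ($i=1,2$), where $(\phi_1^{n+1},\phi_2^{n+1})$ solves the BDF2 scheme at step $n+1$ with constants satisfying $A_1\ge\frac{\mathcal M_1(3\chi_{13}+3\chi_{23}+2\chi_{12})^2}{4}$ and $A_2\ge\frac{\mathcal M_2(3\chi_{13}+3\chi_{23}+2\chi_{12})^2}{4}$. Define, for $m\ge0$, $E_h^{m+1,m}=G_h(\phi_1^{m+1},\phi_2^{m+1})+\frac{\Delta t}{4\mathcal M_1}\big\|\frac{\phi_1^{m+1}-\phi_1^m}{\Delta t}\big\|_{-1,h}^2+\frac{\Delta t}{4\mathcal M_2}\big\|\frac{\phi_2^{m+1}-\phi_2^m}{\Delta t}\big\|_{-1,h}^2+\frac{2\chi_{12}+3\chi_{13}+\chi_{23}}{2}\|\phi_1^{m+1}-\phi_1^m\|_2^2+\frac{2\chi_{12}+\chi_{13}+3\chi_{23}}{2}\|\phi_2^{m+1}-\phi_2^m\|_2^2.$ Then $E_h^{n+1,n}\le E_h^{n,n-1}$.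
   Context: Discrete setting. Fix $L>0$, $N\in\mathbb N$, $h=L/N$, $\Omega=(0,L)^2$. $\mathcal C_{\rm per}$ is the space of real grid functions $\nu=(\nu_{i,j})_{i,j\in\mathbb Z}$ with $\nu_{i+aN,j+bN}=\nu_{i,j}$ for all integers $i,j,a,b$ ($\nu_{i,j}$ is the value at the cell centre $((i-\tfrac12)h,(j-\tfrac12)h)$); periodic face-centred functions are indexed by $(i+\frac12,j)$ (east-west faces) or $(i,j+\frac12)$ (north-south faces). Define $(A_x\nu)_{i+\frac12,j}=\tfrac12(\nu_{i+1,j}+\nu_{i,j})$, $(D_x\nu)_{i+\frac12,j}=\tfrac1h(\nu_{i+1,j}-\nu_{i,j})$, and for east-west face functions $f$, $(a_xf)_{i,j}=\tfrac12(f_{i+\frac12,j}+f_{i-\frac12,j})$, $(d_xf)_{i,j}=\tfrac1h(f_{i+\frac12,j}-f_{i-\frac12,j})$; $A_y,D_y,a_y,d_y$ are defined analogously in the second index. $\nabla_h\nu=(D_x\nu,D_y\nu)$, $\nabla_h\cdot(f^x,f^y)=d_xf^x+d_yf^y$, $\Delta_h\nu=d_x(D_x\nu)+d_y(D_y\nu)$ (the 5-point Laplacian). For $\nu,\xi\in\mathcal C_{\rm per}$: $\langle\nu,\xi\rangle=h^2\sum_{i,j=1}^N\nu_{i,j}\xi_{i,j}$, $\|\nu\|_2=\langle\nu,\nu\rangle^{1/2}$, $\|\nu\|_\infty=\max_{1\le i,j\le N}|\nu_{i,j}|$, $\|\nabla_h\nu\|_2^2=\langle a_x((D_x\nu)^2)+a_y((D_y\nu)^2),1\rangle$,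 $\overline{\nu}=|\Omega|^{-1}\langle\nu,1\rangle$. For $\overline\nu=0$, $(-\Delta_h)^{-1}\nu$ denotes the unique mean-zero $\psi\in\mathcal C_{\rm per}$ with $-\Delta_h\psi=\nu$; for mean-zero $\nu,\xi$, $\langle\nu,\xi\rangle_{-1,h}=\langle\nu,(-\Delta_h)^{-1}\xi\rangle$ and $\|\nu\|_{-1,h}=\langle\nu,\nu\rangle_{-1,h}^{1/2}$. Functions of grid functions (products, quotients, $\ln$) act pointwise. Model. $M_0,N_0>0$, $\alpha=\pi((M_0/\pi)^{1/2}+N_0/2)^2$, $\beta=2(M_0/\pi)^{1/2}+N_0$; $\varepsilon_1,\varepsilon_2,\varepsilon_3>0$; $\chi_{12},\chi_{13},\chi_{23}>0$ with $4\chi_{13}\chi_{23}-(\chi_{12}-\chi_{13}-\chi_{23})^2>0$; mobilities $\mathcal M_1,\mathcal M_2>0$. For $a,b>0$, $a+b<1$: $S(a,b)=\frac{a}{M_0}\ln\frac{\alpha a}{M_0}+\frac{b}{N_0}\ln\frac{\beta b}{N_0}+(1-a-b)\ln(1-a-b)$, $H(a,b)=\chi_{12}ab+\chi_{13}a(1-a-b)+\chi_{23}b(1-a-b)$; thus $\partial_aS=\frac1{M_0}\ln\frac{\alpha a}{M_0}+\frac1{M_0}-\ln(1-a-b)-1$, $\partial_bS=\frac1{N_0}\ln\frac{\beta b}{N_0}+\frac1{N_0}-\ln(1-a-b)-1$, $\partial_aH=\chi_{13}-2\chi_{13}a+(\chi_{12}-\chi_{13}-\chi_{23})b$, $\partial_bH=\chi_{23}-2\chi_{23}b+(\chi_{12}-\chi_{13}-\chi_{23})a$.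 $\kappa(s)=1/(36s)$. The Gibbs triangle is $\mathcal G=\{(a,b):a>0,b>0,a+b<1\}$, and $\vec{\mathcal C}^{\mathcal G}_{\rm per}$ is the set of pairs $(\phi_1,\phi_2)\in\mathcal C_{\rm per}^2$ with $((\phi_1)_{i,j},(\phi_2)_{i,j})\in\mathcal G$ for all $i,j$. For such a pair set $u_1=\phi_1$, $u_2=\phi_2$, $u_3=1-\phi_1-\phi_2$ and, for $k=1,2,3$, $T_k(\phi_1,\phi_2)=a_x(\kappa'(A_xu_k)(D_xu_k)^2)-2d_x(\kappa(A_xu_k)D_xu_k)+a_y(\kappa'(A_yu_k)(D_yu_k)^2)-2d_y(\kappa(A_yu_k)D_yu_k)$. Discrete energy: $G_h(\phi_1,\phi_2)=\langle S(\phi_1,\phi_2)+H(\phi_1,\phi_2),1\rangle+\sum_{k=1}^3\varepsilon_k^2\langle a_x(\kappa(A_xu_k)(D_xu_k)^2)+a_y(\kappa(A_yu_k)(D_yu_k)^2),1\rangle$. Convex-part derivatives: $\delta_{\phi_1}G_{h,c}(\phi_1,\phi_2)=\partial_aS(\phi_1,\phi_2)+\varepsilon_1^2T_1-\varepsilon_3^2T_3$, $\delta_{\phi_2}G_{h,c}(\phi_1,\phi_2)=\partial_bS(\phi_1,\phi_2)+\varepsilon_2^2T_2-\varepsilon_3^2T_3$. BDF2 scheme. Fix $\Delta t>0$ and constants $A_1,A_2\ge0$. For $n\ge1$, given $(\phi_1^{k},\phi_2^{k})$, $k=n-1,n$, set $\hat\phi_i^n=2\phi_i^n-\phi_i^{n-1}$.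 A pair $(\phi_1^{n+1},\phi_2^{n+1})\in\vec{\mathcal C}^{\mathcal G}_{\rm per}$ solves the scheme at step $n+1$ if for $i=1,2$: $\frac{3\phi_i^{n+1}-4\phi_i^n+\phi_i^{n-1}}{2\Delta t}=\mathcal M_i\Delta_h\mu_i^{n+1}$, where $\mu_1^{n+1}=\delta_{\phi_1}G_{h,c}(\phi_1^{n+1},\phi_2^{n+1})+\partial_aH(\hat\phi_1^n,\hat\phi_2^n)-A_1\Delta t\,\Delta_h(\phi_1^{n+1}-\phi_1^n)$ and $\mu_2^{n+1}=\delta_{\phi_2}G_{h,c}(\phi_1^{n+1},\phi_2^{n+1})+\partial_bH(\hat\phi_1^n,\hat\phi_2^n)-A_2\Delta t\,\Delta_h(\phi_2^{n+1}-\phi_2^n)$. *)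

From Stdlib Require Import ClassicalEpsilon.
From mathcomp Require Import all_boot all_order all_algebra.
From mathcomp Require Import reals exp trigo.
Set Implicit Arguments. Unset Strict Implicit. Unset Printing Implicit Defensive.
Import Order.TTheory GRing.Theory Num.Theory.
Local Open Scope ring_scope.

Section Grid.
Variable R : realType.

(* cell-centred grid functions: v i j = value at ((i-1/2)h,(j-1/2)h) *)
Definition grid := int -> int -> R.
(* Face-centred functions are also stored as int -> int -> R:
   east-west faces: f i j = f_{i+1/2,j};  north-south faces: g i j = g_{i,j+1/2}. *)

Definition periodic (N : nat) (v : grid) : Prop :=
  forall i j a b : int, v (i + a * N%:Z) (j + b * N%:Z) = v i j.

Definition Ax (v : grid) : grid := fun i j => (v (i + 1) j + v i j) / 2.
Definition Dx (h : R) (v : grid) : grid := fun i j => (v (i + 1) j - v i j) / h.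
Definition ax (f : grid) : grid := fun i j => (f i j + f (i - 1) j) / 2.
Definition dx (h : R) (f : grid) : grid := fun i j => (f i j - f (i - 1) j) / h.
Definition Ay (v : grid) : grid := fun i j => (v i (j + 1) + v i j) / 2.
Definition Dy (h : R) (v : grid) : grid := fun i j => (v i (j + 1) - v i j) / h.
Definition ay (f : grid) : grid := fun i j => (f i j + f i (j - 1)) / 2.
Definition dy (h : R) (f : grid) : grid := fun i j => (f i j - f i (j - 1)) / h.

Definition lap (h : R) (v : grid) : grid :=
  fun i j => dx h (Dx h v) i j + dy h (Dy h v) i j.

Definition inner (N : nat) (h : R) (v w : grid) : R :=
  h ^+ 2 * \sum_(i < N) \sum_(j < N)
     v (i.+1)%:Z (j.+1)%:Z * w (i.+1)%:Z (j.+1)%:Z.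
Definition one : grid := fun _ _ => 1.
Definition norm2 (N : nat) (h : R) (v : grid) : R := Num.sqrt (inner N h v v).
Definition mean (N : nat) (h L : R) (v : grid) : R := inner N h v one / (L ^+ 2).

(* (-Delta_h)^{-1} v : the (unique, for mean-zero v) mean-zero periodic psi
   with -Delta_h psi = v *)
Definition invlap (N : nat) (h L : R) (v : grid) : grid :=
  epsilon (inhabits (fun _ _ => 0 : R))
    (fun psi : grid => periodic N psi /\ mean N h L psi = 0 /\
                       forall i j, - lap h psi i j = v i j).
Definition neg1_inner (N : nat) (h L : R) (v w : grid) : R :=
  inner N h v (invlap N h L w).
Definition neg1_norm (N : nat) (h L : R) (v : grid) : R :=
  Num.sqrt (neg1_inner N h L v v).

Record model := Model {
  M0 : R; N0 : R; eps1 : R; eps2 : R; eps3 : R;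
  chi12 : R; chi13 : R; chi23 : R }.

Definition alpha (p : model) : R := pi * (Num.sqrt (M0 p / pi) + N0 p / 2) ^+ 2.
Definition beta (p : model) : R := 2 * Num.sqrt (M0 p / pi) + N0 p.

Definition Sfun (p : model) (a b : R) : R :=
  a / M0 p * ln (alpha p * a / M0 p) + b / N0 p * ln (beta p * b / N0 p)
  + (1 - a - b) * ln (1 - a - b).
Definition Hfun (p : model) (a b : R) : R :=
  chi12 p * a * b + chi13 p * a * (1 - a - b) + chi23 p * b * (1 - a - b).
Definition dSa (p : model) (a b : R) : R :=
  (M0 p)^-1 * ln (alpha p * a / M0 p) + (M0 p)^-1 - ln (1 - a - b) - 1.
Definition dSb (p : model) (a b : R) : R :=
  (N0 p)^-1 * ln (beta p * b / N0 p) + (N0 p)^-1 - ln (1 - a - b) - 1.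
Definition dHa (p : model) (a b : R) : R :=
  chi13 p - 2 * chi13 p * a + (chi12 p - chi13 p - chi23 p) * b.
Definition dHb (p : model) (a b : R) : R :=
  chi23 p - 2 * chi23 p * b + (chi12 p - chi13 p - chi23 p) * a.

Definition kappa (s : R) : R := 1 / (36 * s).
Definition kappa' (s : R) : R := - 1 / (36 * s ^+ 2).

Definition pair := (grid * grid)%type.

Definition in_gibbs (N : nat) (ph : pair) : Prop :=
  periodic N ph.1 /\ periodic N ph.2 /\
  forall i j, 0 < ph.1 i j /\ 0 < ph.2 i j /\ ph.1 i j + ph.2 i j < 1.

Definition u1 (ph : pair) : grid := ph.1.
Definition u2 (ph : pair) : grid := ph.2.
Definition u3 (ph : pair) : grid := fun i j => 1 - ph.1 i j - ph.2 i j.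

Definition Tk (h : R) (u : grid) : grid := fun i j =>
  ax (fun i j => kappa' (Ax u i j) * (Dx h u i j) ^+ 2) i j
  - 2 * dx h (fun i j => kappa (Ax u i j) * Dx h u i j) i j
  + ay (fun i j => kappa' (Ay u i j) * (Dy h u i j) ^+ 2) i j
  - 2 * dy h (fun i j => kappa (Ay u i j) * Dy h u i j) i j.

Definition grad_term (h : R) (u : grid) : grid := fun i j =>
  ax (fun i j => kappa (Ax u i j) * (Dx h u i j) ^+ 2) i j
  + ay (fun i j => kappa (Ay u i j) * (Dy h u i j) ^+ 2) i j.

Definition Gh (N : nat) (h : R) (p : model) (ph : pair) : R :=
  inner N h (fun i j => Sfun p (ph.1 i j) (ph.2 i j) + Hfun p (ph.1 i j) (ph.2 i j)) one
  + eps1 p ^+ 2 * inner N h (grad_term h (u1 ph)) one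
  + eps2 p ^+ 2 * inner N h (grad_term h (u2 ph)) one
  + eps3 p ^+ 2 * inner N h (grad_term h (u3 ph)) one.

Definition dG1 (h : R) (p : model) (ph : pair) : grid := fun i j =>
  dSa p (ph.1 i j) (ph.2 i j) + eps1 p ^+ 2 * Tk h (u1 ph) i j
  - eps3 p ^+ 2 * Tk h (u3 ph) i j.
Definition dG2 (h : R) (p : model) (ph : pair) : grid := fun i j =>
  dSb p (ph.1 i j) (ph.2 i j) + eps2 p ^+ 2 * Tk h (u2 ph) i j
  - eps3 p ^+ 2 * Tk h (u3 ph) i j.

(* BDF2 scheme at step n+1: pm = step n-1, pn = step n, pp = step n+1 *)
Definition bdf2_step (h : R) (p : model) (Mob1 Mob2 dt A1 A2 : R)
    (pm pn pp : pair) : Prop :=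
  let hat1 : grid := fun i j => 2 * pn.1 i j - pm.1 i j in
  let hat2 : grid := fun i j => 2 * pn.2 i j - pm.2 i j in
  let mu1 : grid := fun i j => dG1 h p pp i j + dHa p (hat1 i j) (hat2 i j)
      - A1 * dt * lap h (fun i j => pp.1 i j - pn.1 i j) i j in
  let mu2 : grid := fun i j => dG2 h p pp i j + dHb p (hat1 i j) (hat2 i j)
      - A2 * dt * lap h (fun i j => pp.2 i j - pn.2 i j) i j in
  forall i j,
    (3 * pp.1 i j - 4 * pn.1 i j + pm.1 i j) / (2 * dt) = Mob1 * lap h mu1 i j /\
    (3 * pp.2 i j - 4 * pn.2 i j + pm.2 i j) / (2 * dt) = Mob2 * lap h mu2 i j.

(* modified energy E_h^{m+1,m} with pnew = step m+1, pold = step m *)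
Definition Eh (N : nat) (h L : R) (p : model) (Mob1 Mob2 dt : R)
    (pnew pold : pair) : R :=
  Gh N h p pnew
  + dt / (4 * Mob1) *
      neg1_norm N h L (fun i j => (pnew.1 i j - pold.1 i j) / dt) ^+ 2
  + dt / (4 * Mob2) *
      neg1_norm N h L (fun i j => (pnew.2 i j - pold.2 i j) / dt) ^+ 2
  + (2 * chi12 p + 3 * chi13 p + chi23 p) / 2 *
      norm2 N h (fun i j => pnew.1 i j - pold.1 i j) ^+ 2
  + (2 * chi12 p + chi13 p + 3 * chi23 p) / 2 *
      norm2 N h (fun i j => pnew.2 i j - pold.2 i j) ^+ 2.

End Grid.

(* Write d_k = phi_k^{n+1} - phi_k^n. The logarithmic part S and the gradient
   energy are convex, so G_h(phi^{n+1}) - G_h(phi^n) is bounded by the pairing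
   of the convex chemical potential at phi^{n+1} with d, plus the increment of
   the concave part H. Since H is quadratic, evaluating its derivative at the
   extrapolation 2 phi^n - phi^{n-1} instead of at phi^n costs an explicit
   quadratic form, bounded by K (|d_1|^2 + |d_2|^2), K = 3 chi13 + 3 chi23 + 2 chi12,
   once the previous increments are absorbed into the chi-weighted L^2 terms of E_h.
   Testing component k of the scheme with psi = (-Delta_h)^{-1} (d_k / dt), which
   exists because the periodic 5-point Laplacian maps onto mean-zero grid
   functions, turns the BDF2 quotient into
   -(dt/M_k) (5/4 |d_k/dt|_{-1}^2 - 1/4 |(phi_k^n - phi_k^{n-1})/dt|_{-1}^2),
   and the stabilization A_k dt |grad d_k|^2 absorbs K |d_k|^2 by Young's
   inequality precisely when A_k >= M_k K^2 / 4. What remains is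
   -(dt / 4 M_k) times the change of the H^{-1} terms, i.e. E_h^{n+1,n} <= E_h^{n,n-1}. *)

From HB Require Import structures.
From Pilot Require Import Defs.
From Stdlib Require Import ClassicalEpsilon.
From mathcomp Require Import all_boot all_order all_algebra.
From mathcomp Require Import reals exp trigo.
From mathcomp Require Import lra ring zify.
Set Implicit Arguments. Unset Strict Implicit. Unset Printing Implicit Defensive.
Import Order.TTheory GRing.Theory Num.Theory.
Local Open Scope ring_scope.

Lemma periodic_shift_mulz (R : Type) (N : nat) (f : int -> R) :
  (forall i, f (i + N%:Z) = f i) -> forall a i, f (i + a * N%:Z) = f i.
Proof.
move=> fN; have fkN (k : nat) i : f (i + k%:Z * N%:Z) = f i.
  by elim: k i => [|k IH] i; rewrite ?mul0r ?addr0 // -addn1 PoszD mulrDl mul1r addrA fN IH.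
case=> k i; first exact: fkN.
by rewrite NegzE mulNr -[in RHS](subrK ((k.+1)%:Z * N%:Z) i) fkN.
Qed.

Section PeriodicGrids.
Variable R : realType.
Variable N : nat.
Implicit Types (u v : grid R).

Definition shift_periodic u : Prop :=
  (forall i j, u (i + N%:Z) j = u i j) /\ (forall i j, u i (j + N%:Z) = u i j).

Lemma periodicP u : Defs.periodic N u <-> shift_periodic u.
Proof.
split=> [Pu | [Px Py] i j a b].
  by split=> i j; [have := Pu i j 1 0 | have := Pu i j 0 1]; rewrite mul1r mul0r addr0.
rewrite (periodic_shift_mulz (f := fun i => u i _)) //.
exact: (periodic_shift_mulz (f := fun j => u i j)).
Qed.

Local Notation sp := shift_periodic.

Lemma shift_periodic_const (c : R) : sp (fun _ _ => c).
Proof. by []. Qed.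

Lemma shift_periodic_comp1 (f : R -> R) u : sp u -> sp (fun i j => f (u i j)).
Proof. by case=> ux uy; split=> i j; rewrite ?ux ?uy. Qed.

Lemma shift_periodic_comp2 (f : R -> R -> R) u v :
  sp u -> sp v -> sp (fun i j => f (u i j) (v i j)).
Proof. by case=> ux uy [vx vy]; split=> i j; rewrite ?ux ?uy ?vx ?vy. Qed.

Lemma shift_periodic_shiftx (g : int -> int) u :
  (forall i, g (i + N%:Z) = g i + N%:Z) -> sp u -> sp (fun i j => u (g i) j).
Proof. by move=> gN [ux uy]; split=> i j; rewrite ?uy // gN ux. Qed.

Lemma shift_periodic_shifty (g : int -> int) u :
  (forall j, g (j + N%:Z) = g j + N%:Z) -> sp u -> sp (fun i j => u i (g j)).
Proof. by move=> gN [ux uy]; split=> i j; rewrite ?ux // gN uy. Qed.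

End PeriodicGrids.

(* The [ring] branch discharges the index side conditions of the shift lemmas. *)
Ltac periodicity :=
  repeat first [ assumption | move=> ?; ring | apply: shift_periodic_const
               | apply: shift_periodic_shiftx | apply: shift_periodic_shifty
               | apply: shift_periodic_comp2 | apply: shift_periodic_comp1 ].

Lemma sum_ord_shift (V : nmodType) (m : nat) (g : int -> V) : g 0 = g m ->
  \sum_(i < m) g (i.+1)%:Z = \sum_(i < m) g i%:Z.
Proof.
case: m => [|m] g0m; first by rewrite !big_ord0.
by rewrite big_ord_recr big_ord_recl /= g0m addrC.
Qed.

Section CellSums.
Variable R : realType.
Variable N : nat.
Implicit Types (F : grid R) (c : R).
Local Notation sp := (@shift_periodic R N).

Definition cellsum F : R := \sum_(i < N) \sum_(j < N) F (i.+1)%:Z (j.+1)%:Z.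

Lemma eq_cellsum F F' : (forall i j, F i j = F' i j) -> cellsum F = cellsum F'.
Proof. by move=> FF'; apply: eq_bigr => i _; apply: eq_bigr. Qed.

Lemma ler_cellsum F F' : (forall i j, F i j <= F' i j) -> cellsum F <= cellsum F'.
Proof. by move=> FF'; apply: ler_sum => i _; apply: ler_sum. Qed.

Lemma cellsum_ge0 F : (forall i j, 0 <= F i j) -> 0 <= cellsum F.
Proof. by move=> F0; apply: sumr_ge0 => i _; apply: sumr_ge0. Qed.

Lemma cellsumD F F' : cellsum (fun i j => F i j + F' i j) = cellsum F + cellsum F'.
Proof. by rewrite /cellsum -big_split; apply: eq_bigr => i _; rewrite -big_split. Qed.

Lemma cellsumN F : cellsum (fun i j => - F i j) = - cellsum F.
Proof. by rewrite /cellsum -sumrN; apply: eq_bigr => i _; rewrite -sumrN. Qed.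

Lemma cellsumB F F' : cellsum (fun i j => F i j - F' i j) = cellsum F - cellsum F'.
Proof. by rewrite -cellsumN -cellsumD. Qed.

Lemma cellsumZ c F : cellsum (fun i j => c * F i j) = c * cellsum F.
Proof. by rewrite /cellsum mulr_sumr; apply: eq_bigr => i _; rewrite mulr_sumr. Qed.

Lemma cellsumZr c F : cellsum (fun i j => F i j * c) = cellsum F * c.
Proof. by rewrite mulrC -cellsumZ; apply: eq_cellsum => i j; rewrite mulrC. Qed.

Lemma cellsum_const c : cellsum (fun _ _ => c) = c * (N * N)%:R.
Proof.
rewrite /cellsum (eq_bigr (fun _ => c *+ N)) => [|i _]; last by rewrite sumr_const card_ord.
by rewrite sumr_const card_ord -mulrnA mulr_natr.
Qed.

Lemma cellsum_shiftx F : sp F -> cellsum (fun i j => F (i - 1) j) = cellsum F.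
Proof.
case=> FN _; rewrite /cellsum exchange_big [RHS]exchange_big /=; apply: eq_bigr => j _.
under eq_bigr do rewrite -predn_int //.
by rewrite (sum_ord_shift (g := fun i => F i _)) //; have := FN 0 j.+1; rewrite add0r.
Qed.

Lemma cellsum_shifty F : sp F -> cellsum (fun i j => F i (j - 1)) = cellsum F.
Proof.
case=> _ FN; rewrite /cellsum; apply: eq_bigr => i _.
under eq_bigr do rewrite -predn_int //.
by rewrite (sum_ord_shift (g := fun j => F _ j)) //; have := FN i.+1 0; rewrite add0r.
Qed.

End CellSums.

Section SummationByParts.
Variable R : realType.
Variable N : nat.
Variable h : R.
Implicit Types (u v w F : grid R).
Local Notation cellsum := (@cellsum R N).
Local Notation sp := (@shift_periodic R N).

Lemma cellsum_shiftxM F w : sp F -> sp w ->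
  cellsum (fun i j => F (i - 1) j * w i j) = cellsum (fun i j => F i j * w (i + 1) j).
Proof.
move=> PF Pw; rewrite -[RHS]cellsum_shiftx; last by periodicity.
by apply: eq_cellsum => i j; rewrite subrK.
Qed.

Lemma cellsum_shiftyM F w : sp F -> sp w ->
  cellsum (fun i j => F i (j - 1) * w i j) = cellsum (fun i j => F i j * w i (j + 1)).
Proof.
move=> PF Pw; rewrite -[RHS]cellsum_shifty; last by periodicity.
by apply: eq_cellsum => i j; rewrite subrK.
Qed.

Lemma cellsum_dxM F w : sp F -> sp w ->
  cellsum (fun i j => dx h F i j * w i j) = - cellsum (fun i j => F i j * Dx h w i j).
Proof.
move=> PF Pw.
have -> : cellsum (fun i j => dx h F i j * w i j) =
    (cellsum (fun i j => F i j * w i j) - cellsum (fun i j => F (i - 1) j * w i j)) / h.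
  by rewrite -cellsumB -cellsumZr; apply: eq_cellsum => i j; rewrite /dx; ring.
have -> : cellsum (fun i j => F i j * Dx h w i j) =
    (cellsum (fun i j => F i j * w (i + 1) j) - cellsum (fun i j => F i j * w i j)) / h.
  by rewrite -cellsumB -cellsumZr; apply: eq_cellsum => i j; rewrite /Dx; ring.
by rewrite cellsum_shiftxM //; ring.
Qed.

Lemma cellsum_dyM F w : sp F -> sp w ->
  cellsum (fun i j => dy h F i j * w i j) = - cellsum (fun i j => F i j * Dy h w i j).
Proof.
move=> PF Pw.
have -> : cellsum (fun i j => dy h F i j * w i j) =
    (cellsum (fun i j => F i j * w i j) - cellsum (fun i j => F i (j - 1) * w i j)) / h.
  by rewrite -cellsumB -cellsumZr; apply: eq_cellsum => i j; rewrite /dy; ring.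
have -> : cellsum (fun i j => F i j * Dy h w i j) =
    (cellsum (fun i j => F i j * w i (j + 1)) - cellsum (fun i j => F i j * w i j)) / h.
  by rewrite -cellsumB -cellsumZr; apply: eq_cellsum => i j; rewrite /Dy; ring.
by rewrite cellsum_shiftyM //; ring.
Qed.

Lemma cellsum_axM F w : sp F -> sp w ->
  cellsum (fun i j => ax F i j * w i j) = cellsum (fun i j => F i j * Ax w i j).
Proof.
move=> PF Pw.
have -> : cellsum (fun i j => ax F i j * w i j) =
    (cellsum (fun i j => F i j * w i j) + cellsum (fun i j => F (i - 1) j * w i j)) / 2.
  by rewrite -cellsumD -cellsumZr; apply: eq_cellsum => i j; rewrite /ax; ring.
have -> : cellsum (fun i j => F i j * Ax w i j) =
    (cellsum (fun i j => F i j * w (i + 1) j) + cellsum (fun i j => F i j * w i j)) / 2.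
  by rewrite -cellsumD -cellsumZr; apply: eq_cellsum => i j; rewrite /Ax; ring.
by rewrite cellsum_shiftxM //; ring.
Qed.

Lemma cellsum_ayM F w : sp F -> sp w ->
  cellsum (fun i j => ay F i j * w i j) = cellsum (fun i j => F i j * Ay w i j).
Proof.
move=> PF Pw.
have -> : cellsum (fun i j => ay F i j * w i j) =
    (cellsum (fun i j => F i j * w i j) + cellsum (fun i j => F i (j - 1) * w i j)) / 2.
  by rewrite -cellsumD -cellsumZr; apply: eq_cellsum => i j; rewrite /ay; ring.
have -> : cellsum (fun i j => F i j * Ay w i j) =
    (cellsum (fun i j => F i j * w i (j + 1)) + cellsum (fun i j => F i j * w i j)) / 2.
  by rewrite -cellsumD -cellsumZr; apply: eq_cellsum => i j; rewrite /Ay; ring.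
by rewrite cellsum_shiftyM //; ring.
Qed.

Lemma cellsum_ax F : sp F -> cellsum (ax F) = cellsum F.
Proof. by move=> PF; rewrite /ax cellsumZr cellsumD cellsum_shiftx //; field. Qed.

Lemma cellsum_ay F : sp F -> cellsum (ay F) = cellsum F.
Proof. by move=> PF; rewrite /ay cellsumZr cellsumD cellsum_shifty //; field. Qed.

Definition dirichlet u v : R :=
  cellsum (fun i j => Dx h u i j * Dx h v i j + Dy h u i j * Dy h v i j).

Lemma cellsum_lapM u v : sp u -> sp v ->
  cellsum (fun i j => lap h u i j * v i j) = - dirichlet u v.
Proof.
move=> Pu Pv; rewrite /dirichlet cellsumD opprD -cellsum_dxM -?cellsum_dyM -?cellsumD;
  try by periodicity.
by apply: eq_cellsum => i j; rewrite /lap mulrDl.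
Qed.

Lemma dirichletC u v : dirichlet u v = dirichlet v u.
Proof. by apply: eq_cellsum => i j; rewrite mulrC [Dy h u i j * _]mulrC. Qed.

Lemma dirichlet_ge0 u : 0 <= dirichlet u u.
Proof. by apply: cellsum_ge0 => i j; rewrite -!expr2 addr_ge0 ?sqr_ge0. Qed.

Lemma young_weighted (c A x y : R) : 0 < A ->
  c * (x * y) <= A * x ^+ 2 + c ^+ 2 / (4 * A) * y ^+ 2.
Proof.
move=> A0; rewrite -subr_ge0.
have -> : A * x ^+ 2 + c ^+ 2 / (4 * A) * y ^+ 2 - c * (x * y)
          = (2 * A * x - c * y) ^+ 2 / (4 * A) by field; rewrite gt_eqF.
by rewrite divr_ge0 ?sqr_ge0 // mulr_ge0 // ltW.
Qed.

Lemma dirichlet_young (c A : R) u v : 0 < A ->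
  c * dirichlet u v <= A * dirichlet u u + c ^+ 2 / (4 * A) * dirichlet v v.
Proof.
move=> A0; rewrite /dirichlet -!cellsumZ -cellsumD; apply: ler_cellsum => i j.
have := young_weighted c (Dx h u i j) (Dx h v i j) A0.
have := young_weighted c (Dy h u i j) (Dy h v i j) A0.
rewrite !expr2; lra.
Qed.

End SummationByParts.

Section PoissonSolvability.
Variable R : realType.
Variable n : nat.
Local Notation N := n.+1.
Variable h : R.
Hypothesis h_neq0 : h != 0.
Local Notation cellsum := (@cellsum R N).
Local Notation sp := (@shift_periodic R N).

Definition cell_index (i : int) : 'I_N := inord `|((i - 1) %% N%:Z)%Z|%N.

Definition periodize (W : 'M[R]_N) : grid R := fun i j => W (cell_index i) (cell_index j).

Lemma cell_index_cell (a : 'I_N) : cell_index (a.+1)%:Z = a.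
Proof.
apply: val_inj; rewrite /cell_index -predn_int // modz_small /=; last by rewrite ltz_nat ltn_ord.
by rewrite inordK.
Qed.

Lemma cell_indexE (i : int) : ((cell_index i).+1)%:Z = ((i - 1) %% N%:Z)%Z + 1.
Proof.
have r0 : (0 <= ((i - 1) %% N%:Z)%Z) by rewrite modz_ge0.
rewrite /cell_index inordK; last by rewrite -ltz_nat gez0_abs // ltz_pmod.
by rewrite -addn1 PoszD gez0_abs.
Qed.

Lemma shift_periodic_periodize W : sp (periodize W).
Proof. by split=> i j; rewrite /periodize /cell_index addrAC modzDr. Qed.

Lemma shift_periodic_cellE u : sp u -> forall i j,
  u i j = u ((cell_index i).+1)%:Z ((cell_index j).+1)%:Z.
Proof.
move=> /periodicP Pu i j; rewrite !cell_indexE.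
have E k : ((k - 1) %% N%:Z)%Z + 1 + ((k - 1) %/ N%:Z)%Z * N%:Z = k.
  by rewrite addrAC [X in X + 1]addrC -divz_eq subrK.
by rewrite -{1}(E i) -{1}(E j) Pu.
Qed.

Lemma eq_shift_periodic u v : sp u -> sp v ->
  (forall a b : 'I_N, u (a.+1)%:Z (b.+1)%:Z = v (a.+1)%:Z (b.+1)%:Z) ->
  forall i j, u i j = v i j.
Proof. by move=> Pu Pv uv i j; rewrite (shift_periodic_cellE Pu) (shift_periodic_cellE Pv). Qed.

Lemma cellsum_lap u : sp u -> cellsum (lap h u) = 0.
Proof.
move=> Pu; rewrite (@eq_cellsum _ _ _ (fun i j => lap h u i j * 1)) => [|i j]; last first.
  by rewrite mulr1.
rewrite cellsum_lapM //.
rewrite /dirichlet (@eq_cellsum _ _ _ (fun _ _ => 0)) ?cellsum_const ?mul0r ?oppr0 // => i j.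
by rewrite /Dx /Dy !subrr !mul0r !mulr0 addr0.
Qed.

Lemma dirichlet_eq0 u : sp u -> dirichlet N h u u = 0 -> forall i j,
  u (i + 1) j = u i j /\ u i (j + 1) = u i j.
Proof.
move=> Pu D0.
have cell0 (a b : 'I_N) : Dx h u (a.+1)%:Z (b.+1)%:Z = 0 /\ Dy h u (a.+1)%:Z (b.+1)%:Z = 0.
  have row_ge0 (a' : 'I_N) : 0 <= \sum_(b' < N) (Dx h u (a'.+1)%:Z (b'.+1)%:Z ^+ 2
                                             + Dy h u (a'.+1)%:Z (b'.+1)%:Z ^+ 2).
    by apply: sumr_ge0 => b' _; rewrite addr_ge0 ?sqr_ge0.
  move: D0; rewrite /dirichlet /cellsum; under eq_bigr do under eq_bigr do rewrite -!expr2.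
  move/(psumr_eq0P (fun a' _ => row_ge0 a')) => /(_ a isT).
  move/(psumr_eq0P (fun b' _ => addr_ge0 (sqr_ge0 _) (sqr_ge0 _))) => /(_ b isT) /eqP.
  by rewrite paddr_eq0 ?sqr_ge0 // !sqrf_eq0 => /andP[/eqP ? /eqP ?].
have [Dx0 Dy0] : (forall i j, Dx h u i j = 0) /\ (forall i j, Dy h u i j = 0).
  by split; apply: (eq_shift_periodic (v := fun _ _ => 0)) => //; try periodicity;
    move=> a b; case: (cell0 a b).
move=> i j; move: (Dx0 i j) (Dy0 i j).
by rewrite /Dx /Dy => /eqP; rewrite mulf_eq0 invr_eq0 (negbTE h_neq0) orbF subr_eq0
  => /eqP -> /eqP; rewrite mulf_eq0 invr_eq0 (negbTE h_neq0) orbF subr_eq0 => /eqP ->.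
Qed.

Definition lapmx (W : 'M[R]_N) : 'M[R]_N := \matrix_(a, b) lap h (periodize W) (a.+1)%:Z (b.+1)%:Z.

Fact lapmx_semilinear : semilinear lapmx.
Proof.
by split=> [k W|W1 W2]; apply/matrixP => a b;
  rewrite !mxE /lap /dx /Dx /dy /Dy /periodize !mxE; ring.
Qed.

HB.instance Definition _ :=
  GRing.isSemilinear.Build R 'M[R]_N 'M[R]_N _ lapmx lapmx_semilinear.

Definition summx (W : 'M[R]_N) : R^o := \sum_(a < N) \sum_(b < N) W a b.

Fact summx_semilinear : semilinear summx.
Proof.
split=> [k W|W1 W2]; rewrite /summx.
  by rewrite [in RHS]/GRing.scale /= mulr_sumr; apply: eq_bigr => a _;
    rewrite mulr_sumr; apply: eq_bigr => b _; rewrite mxE.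
by rewrite -big_split; apply: eq_bigr => a _; rewrite -big_split;
  apply: eq_bigr => b _; rewrite mxE.
Qed.

HB.instance Definition _ :=
  GRing.isSemilinear.Build R 'M[R]_N R^o _ summx summx_semilinear.

Lemma summx_cellsum u : summx (\matrix_(a, b) u (a.+1)%:Z (b.+1)%:Z) = cellsum u.
Proof. by apply: eq_bigr => a _; apply: eq_bigr => b _; rewrite mxE. Qed.

Lemma periodizeK W : \matrix_(a, b) periodize W (a.+1)%:Z (b.+1)%:Z = W.
Proof. by apply/matrixP => a b; rewrite mxE /periodize !cell_index_cell. Qed.

Lemma lapmx_eq0 W : lapmx W = 0 -> W = const_mx (W ord0 ord0).
Proof.
move=> /matrixP lapW0; set u := periodize W.
have Pu : sp u := shift_periodic_periodize W.
have lap0 : forall i j, lap h u i j = 0.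
  apply: (eq_shift_periodic (v := fun _ _ => 0)); try periodicity.
  by move=> a b; have := lapW0 a b; rewrite !mxE.
have /(dirichlet_eq0 Pu) u_shift : dirichlet N h u u = 0.
  apply/eqP; rewrite -oppr_eq0 -cellsum_lapM //.
  by rewrite (@eq_cellsum _ _ _ (fun _ _ => 0)) ?cellsum_const ?mul0r // => i j; rewrite lap0 mul0r.
have u_const (k l : nat) : u k.+1%:Z l.+1%:Z = u 1 1.
  elim: k => [|k IHk]; last by rewrite (intS k.+1) addrC (u_shift _ _).1.
  by elim: l => [|l IHl] //; rewrite (intS l.+1) addrC (u_shift _ _).2.
apply/matrixP => a b; rewrite mxE -[W]periodizeK !mxE -/u.
by rewrite u_const -[1]/(ord0 : 'I_N).+1%:Z u_const.
Qed.

(* The kernel of [lapmx] consists of constants and [summx] is onto, so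
   dim (limg lapmx) >= N^2 - 1 = dim (lker summx). *)
Lemma limg_lapmx : limg (linfun lapmx) = lker (linfun summx).
Proof.
set f := linfun lapmx; set g := linfun summx.
have img_sub : (limg f <= lker g)%VS.
  apply/subvP => _ /memv_imgP [W _ ->]; rewrite memv_ker !lfunE /= /lapmx summx_cellsum.
  by rewrite cellsum_lap //; apply: shift_periodic_periodize.
have ker_f : (\dim (lker f) <= 1)%N.
  have /dimvS : (lker f <= <[const_mx 1 : 'M[R]_N]>)%VS.
    apply/subvP => W; rewrite memv_ker lfunE /= => /eqP /lapmx_eq0 ->.
    by apply/vlineP; exists (W ord0 ord0); apply/matrixP => a b; rewrite !mxE mulr1.
  by rewrite dim_vline => /leq_trans; apply; exact: leq_b1.
have img_g : (1 <= \dim (limg g))%N.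
  have /dimvS : (<[g (const_mx 1)]> <= limg g)%VS by rewrite -memvE memv_img ?memvf.
  apply: leq_trans; rewrite dim_vline lfunE /= -[const_mx 1]periodizeK summx_cellsum.
  rewrite (@eq_cellsum _ _ _ (fun _ _ => 1)) => [|i j]; last by rewrite /periodize mxE.
  by rewrite cellsum_const mul1r pnatr_eq0.
have := limg_ker_dim f fullv; have := limg_ker_dim g fullv; rewrite !capfv.
by move=> dim_g dim_f; apply/eqP; rewrite eqEdim img_sub /=; lia.
Qed.

Lemma poisson_solvable v : sp v -> cellsum v = 0 ->
  exists psi, sp psi /\ cellsum psi = 0 /\ forall i j, - lap h psi i j = v i j.
Proof.
move=> Pv v0.
have : \matrix_(a, b) - v (a.+1)%:Z (b.+1)%:Z \in lker (linfun summx).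
  by rewrite memv_ker lfunE /= (summx_cellsum (fun i j => - v i j)) cellsumN v0 oppr0.
rewrite -limg_lapmx => /memv_imgP [W _ /matrixP lapW].
have PW := shift_periodic_periodize W.
set c := cellsum (periodize W) / (N * N)%:R.
exists (fun i j => periodize W i j - c); split; last split.
- by periodicity.
- by rewrite cellsumB cellsum_const mulfVK ?subrr // pnatr_eq0.
- apply: eq_shift_periodic; try periodicity.
  move=> a b; have := lapW a b; rewrite lfunE !mxE => lapWab.
  by rewrite -[v _ _]opprK lapWab /lap /dx /Dx /dy /Dy; ring.
Qed.

End PoissonSolvability.

Section DiscreteNorms.
Variable R : realType.
Variable N : nat.
Variable h L : R.
Implicit Types (u v w : grid R).
Local Notation cellsum := (@cellsum R N).

Lemma innerE v w : inner N h v w = h ^+ 2 * cellsum (fun i j => v i j * w i j).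
Proof. by []. Qed.

Lemma inner_one v : inner N h v (Defs.one R) = h ^+ 2 * cellsum v.
Proof. by rewrite innerE; congr (_ * _); apply: eq_cellsum => i j; rewrite mulr1. Qed.

Lemma innerDl u v w :
  inner N h (fun i j => u i j + v i j) w = inner N h u w + inner N h v w.
Proof.
rewrite !innerE -mulrDr -cellsumD; congr (_ * _).
by apply: eq_cellsum => i j; rewrite mulrDl.
Qed.

Lemma norm2E v : norm2 N h v ^+ 2 = h ^+ 2 * cellsum (fun i j => v i j ^+ 2).
Proof.
rewrite /norm2 sqr_sqrtr innerE; last first.
  by rewrite mulr_ge0 ?sqr_ge0 // cellsum_ge0 // => i j; rewrite -expr2 sqr_ge0.
by congr (_ * _); apply: eq_cellsum => i j; rewrite expr2.
Qed.

Lemma meanE v : mean N h L v = h ^+ 2 / L ^+ 2 * cellsum v.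
Proof. by rewrite /mean inner_one mulrAC. Qed.

Hypothesis h_gt0 : 0 < h.
Hypothesis L_gt0 : 0 < L.

Lemma eq_mean_cellsum u v : mean N h L u = mean N h L v -> cellsum u = cellsum v.
Proof. by rewrite !meanE => /mulfI; apply; rewrite mulf_neq0 ?invr_eq0 ?expf_neq0 ?gt_eqF. Qed.

End DiscreteNorms.

Section StabilizedBDF2.
Variable R : realType.
Variable n : nat.
Local Notation N := n.+1.
Variable h L : R.
Hypothesis h_gt0 : 0 < h.
Implicit Types (u v w : grid R).
Local Notation cellsum := (@cellsum R N).
Local Notation sp := (@shift_periodic R N).
Local Notation dirichlet := (dirichlet N h).
Local Notation invlap := (invlap N h L).

Lemma invlap_spec v : sp v -> cellsum v = 0 ->
  sp (invlap v) /\ forall i j, - lap h (invlap v) i j = v i j.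
Proof.
move=> Pv v0; have [psi [Ppsi [psi0 lap_psi]]] := poisson_solvable (lt0r_neq0 h_gt0) Pv v0.
have [|P [_ ?]] := epsilon_spec (inhabits (fun _ _ => 0 : R))
  (fun psi => Defs.periodic N psi /\ mean N h L psi = 0 /\ forall i j, - lap h psi i j = v i j).
  by exists psi; rewrite periodicP meanE psi0 mulr0.
by split=> //; apply/periodicP.
Qed.

Lemma neg1_normE v : sp v -> cellsum v = 0 ->
  neg1_norm N h L v ^+ 2 = h ^+ 2 * dirichlet (invlap v) (invlap v).
Proof.
move=> Pv v0; have [Ppsi lap_psi] := invlap_spec Pv v0.
have E : neg1_inner N h L v v = h ^+ 2 * dirichlet (invlap v) (invlap v).
  rewrite /neg1_inner innerE -[dirichlet _ _]opprK -cellsum_lapM // -cellsumN.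
  by congr (_ * _); apply: eq_cellsum => i j; rewrite -lap_psi mulNr.
by rewrite /neg1_norm E sqr_sqrtr // mulr_ge0 ?sqr_ge0 ?dirichlet_ge0.
Qed.

Section Component.
Variables (M dt A K : R) (a0 a a' nu : grid R).
Hypotheses (M_gt0 : 0 < M) (dt_gt0 : 0 < dt) (K_gt0 : 0 < K) (A_ge : M * K ^+ 2 / 4 <= A).
Hypotheses (Pa0 : sp a0) (Pa : sp a) (Pa' : sp a') (Pnu : sp nu).
Hypotheses (a0a : cellsum a0 = cellsum a) (aa' : cellsum a = cellsum a').
Local Notation d := (fun i j => a' i j - a i j).
Local Notation dp := (fun i j => a i j - a0 i j).
Local Notation mu := (fun i j => nu i j - A * dt * lap h d i j).
Hypothesis scheme : forall i j,
  (3 * a' i j - 4 * a i j + a0 i j) / (2 * dt) = M * lap h mu i j.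

Let cellsum_d_dt : cellsum (fun i j => (a' i j - a i j) / dt) = 0.
Proof. by rewrite cellsumZr cellsumB aa' subrr mul0r. Qed.

Let cellsum_dp_dt : cellsum (fun i j => (a i j - a0 i j) / dt) = 0.
Proof. by rewrite cellsumZr cellsumB a0a subrr mul0r. Qed.

Let psi := invlap (fun i j => (a' i j - a i j) / dt).
Let psp := invlap (fun i j => (a i j - a0 i j) / dt).

Lemma bdf2_cellsum_dissipation :
  cellsum (fun i j => nu i j * d i j) + K * cellsum (fun i j => d i j ^+ 2)
  + dt / (4 * M) * (dirichlet psi psi - dirichlet psp psp) <= 0.
Proof.
have [Ppsi psiE] : sp psi /\ forall i j, d i j = - dt * lap h psi i j.
  have [|P lap_psi] := invlap_spec (v := fun i j => (a' i j - a i j) / dt) _ cellsum_d_dt.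
    by periodicity.
  by split=> // i j; rewrite mulNr -mulrN lap_psi mulrC divfK ?gt_eqF.
have [Ppsp pspE] : sp psp /\ forall i j, dp i j = - dt * lap h psp i j.
  have [|P lap_psp] := invlap_spec (v := fun i j => (a i j - a0 i j) / dt) _ cellsum_dp_dt.
    by periodicity.
  by split=> // i j; rewrite mulNr -mulrN lap_psp mulrC divfK ?gt_eqF.
have Pd : sp d by periodicity.
have Pmu : sp mu by periodicity.
have scheme_psi : (3 * dirichlet psi psi - dirichlet psp psi) / 2 = - M * dirichlet mu psi.
  rewrite -[dirichlet mu psi]opprK -[dirichlet psi psi]opprK -[dirichlet psp psi]opprK.
  rewrite -!cellsum_lapM // mulrNN -cellsumZ.
  transitivity (cellsum (fun i j => (3 * a' i j - 4 * a i j + a0 i j) / (2 * dt) * psi i j)).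
    rewrite [RHS](@eq_cellsum _ _ _ (fun i j =>
      3 / 2 * - (lap h psi i j * psi i j) - 1 / 2 * - (lap h psp i j * psi i j))).
      by rewrite cellsumB !cellsumZ !cellsumN; field.
    move=> i j; have -> : 3 * a' i j - 4 * a i j + a0 i j = 3 * d i j - dp i j by ring.
    by rewrite psiE pspE; field; rewrite gt_eqF.
  by apply: eq_cellsum => i j; rewrite scheme mulrA.
have mu_d : cellsum (fun i j => mu i j * d i j) = dt * dirichlet psi mu.
  rewrite -[dirichlet _ _]opprK -cellsum_lapM // mulrN -mulNr -cellsumZ.
  by apply: eq_cellsum => i j; rewrite psiE; ring.
have nu_d : cellsum (fun i j => nu i j * d i j)
            = cellsum (fun i j => mu i j * d i j) - A * dt * dirichlet d d.
  rewrite -[dirichlet d d]opprK -cellsum_lapM // mulrN opprK -cellsumZ -cellsumD.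
  by apply: eq_cellsum => i j; ring.
have d_sq : cellsum (fun i j => d i j ^+ 2) = dt * dirichlet d psi.
  rewrite dirichletC -[dirichlet _ _]opprK -cellsum_lapM // mulrN -mulNr -cellsumZ.
  by apply: eq_cellsum => i j; rewrite expr2 {1}psiE; ring.
have psp_psi : dirichlet psp psi <= 1 / 2 * dirichlet psp psp + 1 / 2 * dirichlet psi psi.
  have half_gt0 : 0 < 1 / 2 :> R by rewrite divr_gt0.
  have := dirichlet_young N h 1 psp psi half_gt0; rewrite expr1n mul1r.
  by have -> : 1 / (4 * (1 / 2)) = 1 / 2 :> R by field.
(* Young's inequality with weight A; the stabilization A >= M K^2 / 4 is exactly
   what keeps the psi-term below dt / M. *)
have d_sq_le :
    K * cellsum (fun i j => d i j ^+ 2) <= A * dt * dirichlet d d + dt / M * dirichlet psi psi.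
  have A_gt0 : 0 < A by apply: lt_le_trans A_ge; rewrite divr_gt0 // mulr_gt0 // exprn_gt0.
  have coef : K ^+ 2 / (4 * A) <= 1 / M.
    rewrite -subr_ge0; have -> : 1 / M - K ^+ 2 / (4 * A) = (A - M * K ^+ 2 / 4) / (A * M).
      by field; rewrite !gt_eqF.
    by rewrite divr_ge0 ?subr_ge0 // mulr_ge0 // ltW.
  have coefY := ler_wpM2r (dirichlet_ge0 N h psi) coef.
  have young_d := dirichlet_young N h K d psi A_gt0.
  have : K * dirichlet d psi <= A * dirichlet d d + 1 / M * dirichlet psi psi by lra.
  by move=> /(ler_wpM2l (ltW dt_gt0)); rewrite d_sq; lra.
have mu_d' : cellsum (fun i j => mu i j * d i j)
             = - (dt / M) * ((3 * dirichlet psi psi - dirichlet psp psi) / 2).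
  by rewrite mu_d dirichletC scheme_psi; field; rewrite gt_eqF.
have := ler_wpM2l (ltW (divr_gt0 dt_gt0 M_gt0)) psp_psi.
have -> : dt / (4 * M) = dt / M / 4 by field; rewrite gt_eqF.
rewrite nu_d mu_d'; lra.
Qed.

Lemma bdf2_dissipation :
  inner N h nu d + K * norm2 N h d ^+ 2
  + dt / (4 * M) * (neg1_norm N h L (fun i j => (a' i j - a i j) / dt) ^+ 2
                    - neg1_norm N h L (fun i j => (a i j - a0 i j) / dt) ^+ 2) <= 0.
Proof.
rewrite innerE norm2E !neg1_normE ?cellsum_d_dt ?cellsum_dp_dt //; try by periodicity.
by have := bdf2_cellsum_dissipation; rewrite -(pmulr_rle0 _ (exprn_gt0 2 h_gt0)); lra.
Qed.

End Component.
End StabilizedBDF2.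

Section PointwiseConvexity.
Variable R : realType.

Lemma xlnx_tangent (k x y : R) : 0 < k -> 0 < x -> 0 < y ->
  y * ln (k * y) - x * ln (k * x) <= (ln (k * y) + 1) * (y - x).
Proof.
move=> k0 x0 y0.
have ln_split : ln (k * x) = ln (k * y) - ln (y / x).
  by rewrite -ln_div ?posrE ?mulr_gt0 ?invr_gt0 //; apply: congr1; field; rewrite !gt_eqF.
have ln_le : ln (y / x) <= y / x - 1.
  have := @le_ln1Dx R (y / x - 1); rewrite subrKC; apply.
  have : 0 < y / x by rewrite divr_gt0.
  lra.
have := ler_wpM2l (ltW x0) ln_le.
have -> : x * (y / x - 1) = y - x by field; rewrite gt_eqF.
by rewrite ln_split; lra.
Qed.

(* Joint convexity of the perspective (s, d) |-> d^2 / (36 s). *)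
Lemma kappa_sq_tangent (s s' d d' : R) : 0 < s -> 0 < s' ->
  kappa s' * d' ^+ 2 - kappa s * d ^+ 2 <=
  kappa' s' * d' ^+ 2 * (s' - s) + 2 * (kappa s' * d') * (d' - d).
Proof.
move=> s0 s'0; rewrite -subr_ge0.
have -> : kappa' s' * d' ^+ 2 * (s' - s) + 2 * (kappa s' * d') * (d' - d)
          - (kappa s' * d' ^+ 2 - kappa s * d ^+ 2) = s * (d / s - d' / s') ^+ 2 / 36.
  by rewrite /kappa /kappa'; field; rewrite !gt_eqF.
by rewrite divr_ge0 // mulr_ge0 ?sqr_ge0 // ltW.
Qed.

Variable p : model R.
Hypotheses (M0_gt0 : 0 < M0 p) (N0_gt0 : 0 < N0 p).

Lemma Sfun_tangent a b a' b' :
  0 < a -> 0 < b -> a + b < 1 -> 0 < a' -> 0 < b' -> a' + b' < 1 ->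
  Sfun p a' b' - Sfun p a b <= dSa p a' b' * (a' - a) + dSb p a' b' * (b' - b).
Proof.
move=> a0 b0 ab a'0 b'0 ab'.
have alpha_gt0 : 0 < alpha p.
  by rewrite /alpha mulr_gt0 ?pi_gt0 // exprn_gt0 // ltr_wpDl ?sqrtr_ge0 // divr_gt0.
have beta_gt0 : 0 < beta p by rewrite /beta ltr_wpDl ?mulr_ge0 ?sqrtr_ge0.
have M0i : 0 <= (M0 p)^-1 by rewrite invr_ge0 ltW.
have N0i : 0 <= (N0 p)^-1 by rewrite invr_ge0 ltW.
have := ler_wpM2l M0i (xlnx_tangent (divr_gt0 alpha_gt0 M0_gt0) a0 a'0).
have := ler_wpM2l N0i (xlnx_tangent (divr_gt0 beta_gt0 N0_gt0) b0 b'0).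
have := @xlnx_tangent 1 (1 - a - b) (1 - a' - b') ltr01; rewrite !mul1r.
rewrite /Sfun /dSa /dSb (mulrAC (alpha p) a) (mulrAC (alpha p) a').
rewrite (mulrAC (beta p) b) (mulrAC (beta p) b').
lra.
Qed.

(* H is quadratic, so the left side is an exact quadratic form in the
   increments x, y, u, w; its gap to the right side is the sum of squares [sos]. *)
Lemma Hfun_extrapolation_bound a b x y u w :
  0 <= chi12 p -> 0 <= chi13 p -> 0 <= chi23 p ->
  Hfun p (a + x) (b + y) - Hfun p a b
  - (dHa p (a + u) (b + w) * x + dHb p (a + u) (b + w) * y)
  + (2 * chi12 p + 3 * chi13 p + chi23 p) / 2 * (x ^+ 2 - u ^+ 2)
  + (2 * chi12 p + chi13 p + 3 * chi23 p) / 2 * (y ^+ 2 - w ^+ 2)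
  <= (3 * chi13 p + 3 * chi23 p + 2 * chi12 p) * (x ^+ 2 + y ^+ 2).
Proof.
move=> c12 c13 c23.
have sos : 0 <= chi12 p / 2 * ((x - y) ^+ 2 + (x + w) ^+ 2 + (y + u) ^+ 2 + u ^+ 2 + w ^+ 2)
  + chi13 p / 2 * (2 * (x - u) ^+ 2 + (x - w) ^+ 2 + (y - u) ^+ 2 + (x + y) ^+ 2
                   + x ^+ 2 + 3 * y ^+ 2)
  + chi23 p / 2 * (2 * (y - w) ^+ 2 + (y - u) ^+ 2 + (x - w) ^+ 2 + (x + y) ^+ 2
                   + y ^+ 2 + 3 * x ^+ 2).
  { apply: addr_ge0; first apply: addr_ge0.
    all: apply: mulr_ge0; first exact: divr_ge0.
    all: by repeat apply: addr_ge0; rewrite ?sqr_ge0 // mulr_ge0 ?sqr_ge0. }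
by move: sos; rewrite /Hfun /dHa /dHb; lra.
Qed.

End PointwiseConvexity.

Section GibbsEnergy.
Variable R : realType.
Variable N : nat.
Variable h : R.
Implicit Types (u v F : grid R) (ph : pair R).
Local Notation cellsum := (@cellsum R N).
Local Notation sp := (@shift_periodic R N).

Lemma shift_periodic_Tk u : sp u -> sp (Tk h u).
Proof. by move=> Pu; rewrite /Tk /Ax /Ay /Dx /Dy /ax /ay /dx /dy; periodicity. Qed.

Lemma cellsum_grad_term u : sp u -> cellsum (grad_term h u) =
  cellsum (fun i j => kappa (Ax u i j) * Dx h u i j ^+ 2 + kappa (Ay u i j) * Dy h u i j ^+ 2).
Proof.
by move=> Pu; rewrite /grad_term !cellsumD cellsum_ax ?cellsum_ay //;
  rewrite /Ax /Ay /Dx /Dy; periodicity.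
Qed.

Lemma cellsum_grad_term_tangent u u' : sp u -> sp u' ->
  (forall i j, 0 < u i j) -> (forall i j, 0 < u' i j) ->
  cellsum (grad_term h u') - cellsum (grad_term h u)
  <= cellsum (fun i j => Tk h u' i j * (u' i j - u i j)).
Proof.
move=> Pu Pu' u_gt0 u'_gt0.
set F1 := fun i j => kappa' (Ax u' i j) * Dx h u' i j ^+ 2.
set F2 := fun i j => kappa (Ax u' i j) * Dx h u' i j.
set G1 := fun i j => kappa' (Ay u' i j) * Dy h u' i j ^+ 2.
set G2 := fun i j => kappa (Ay u' i j) * Dy h u' i j.
have PF1 : sp F1 by rewrite /F1 /Ax /Dx; periodicity.
have PF2 : sp F2 by rewrite /F2 /Ax /Dx; periodicity.
have PG1 : sp G1 by rewrite /G1 /Ay /Dy; periodicity.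
have PG2 : sp G2 by rewrite /G2 /Ay /Dy; periodicity.
set w := fun i j => u' i j - u i j.
have Pw : sp w by periodicity.
have -> : cellsum (fun i j => Tk h u' i j * w i j) =
    cellsum (fun i j => F1 i j * Ax w i j + 2 * (F2 i j * Dx h w i j)
                        + G1 i j * Ay w i j + 2 * (G2 i j * Dy h w i j)).
  rewrite (@eq_cellsum _ _ _ (fun i j => ax F1 i j * w i j - 2 * (dx h F2 i j * w i j)
                                  + ay G1 i j * w i j - 2 * (dy h G2 i j * w i j))).
    rewrite cellsumB cellsumD cellsumB !cellsumZ cellsum_axM // cellsum_dxM //.
    by rewrite cellsum_ayM // cellsum_dyM // !cellsumD !cellsumZ; ring.
  by move=> i j; rewrite /Tk; ring.
rewrite !cellsum_grad_term // -cellsumB; apply: ler_cellsum => i j.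
have avg_gt0 v : (forall i j, 0 < v i j) -> 0 < Ax v i j /\ 0 < Ay v i j.
  by move=> v_gt0; rewrite /Ax /Ay !divr_gt0 ?addr_gt0.
have [Ax_gt0 Ay_gt0] := avg_gt0 u u_gt0; have [Ax'_gt0 Ay'_gt0] := avg_gt0 u' u'_gt0.
have := kappa_sq_tangent (Dx h u i j) (Dx h u' i j) Ax_gt0 Ax'_gt0.
have := kappa_sq_tangent (Dy h u i j) (Dy h u' i j) Ay_gt0 Ay'_gt0.
rewrite /F1 /F2 /G1 /G2 /w /Ax /Ay /Dx /Dy; lra.
Qed.

Lemma in_gibbs_shift_periodic ph : in_gibbs N ph -> sp ph.1 /\ sp ph.2.
Proof. by case=> /periodicP P1 [/periodicP P2 _]. Qed.

Lemma in_gibbs_gt0 ph : in_gibbs N ph ->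
  [/\ forall i j, 0 < u1 ph i j, forall i j, 0 < u2 ph i j & forall i j, 0 < u3 ph i j].
Proof.
by case=> _ [_ pos]; split=> i j; have [? [? ?]] := pos i j; rewrite /u3 ?subr_gt0 //; lra.
Qed.

Variable p : model R.

Lemma shift_periodic_dG ph : sp ph.1 -> sp ph.2 -> sp (dG1 h p ph) /\ sp (dG2 h p ph).
Proof.
move=> P1 P2; have P3 : sp (u3 ph) by rewrite /u3; periodicity.
have T1 := shift_periodic_Tk P1; have T2 := shift_periodic_Tk P2.
have T3 := shift_periodic_Tk P3.
by split; rewrite /dG1 /dG2; periodicity.
Qed.

Lemma GhE ph : Gh N h p ph = h ^+ 2 *
  (cellsum (fun i j => Sfun p (ph.1 i j) (ph.2 i j))
   + cellsum (fun i j => Hfun p (ph.1 i j) (ph.2 i j))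
   + eps1 p ^+ 2 * cellsum (grad_term h (u1 ph)) + eps2 p ^+ 2 * cellsum (grad_term h (u2 ph))
   + eps3 p ^+ 2 * cellsum (grad_term h (u3 ph))).
Proof. by rewrite /Gh !inner_one -cellsumD; ring. Qed.

Lemma cellsum_dGM ph ph' :
  cellsum (fun i j => dG1 h p ph' i j * (ph'.1 i j - ph.1 i j))
  + cellsum (fun i j => dG2 h p ph' i j * (ph'.2 i j - ph.2 i j))
  = cellsum (fun i j => dSa p (ph'.1 i j) (ph'.2 i j) * (ph'.1 i j - ph.1 i j)
                        + dSb p (ph'.1 i j) (ph'.2 i j) * (ph'.2 i j - ph.2 i j))
    + eps1 p ^+ 2 * cellsum (fun i j => Tk h (u1 ph') i j * (u1 ph' i j - u1 ph i j))
    + eps2 p ^+ 2 * cellsum (fun i j => Tk h (u2 ph') i j * (u2 ph' i j - u2 ph i j))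
    + eps3 p ^+ 2 * cellsum (fun i j => Tk h (u3 ph') i j * (u3 ph' i j - u3 ph i j)).
Proof.
rewrite -!cellsumZ -!cellsumD; apply: eq_cellsum => i j.
by rewrite /dG1 /dG2 /u1 /u2 /u3; ring.
Qed.

Hypotheses (M0_gt0 : 0 < M0 p) (N0_gt0 : 0 < N0 p).

Lemma Gh_tangent ph ph' : in_gibbs N ph -> in_gibbs N ph' ->
  Gh N h p ph' - Gh N h p ph <= h ^+ 2 *
    (cellsum (fun i j => dG1 h p ph' i j * (ph'.1 i j - ph.1 i j))
     + cellsum (fun i j => dG2 h p ph' i j * (ph'.2 i j - ph.2 i j))
     + (cellsum (fun i j => Hfun p (ph'.1 i j) (ph'.2 i j))
        - cellsum (fun i j => Hfun p (ph.1 i j) (ph.2 i j)))).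
Proof.
move=> G G'; have [P1 P2] := in_gibbs_shift_periodic G.
have [P1' P2'] := in_gibbs_shift_periodic G'.
have P3 : sp (u3 ph) by rewrite /u3; periodicity.
have P3' : sp (u3 ph') by rewrite /u3; periodicity.
have [u1_gt0 u2_gt0 u3_gt0] := in_gibbs_gt0 G.
have [u1'_gt0 u2'_gt0 u3'_gt0] := in_gibbs_gt0 G'.
have T1 := cellsum_grad_term_tangent (u := u1 ph) (u' := u1 ph') P1 P1' u1_gt0 u1'_gt0.
have T2 := cellsum_grad_term_tangent (u := u2 ph) (u' := u2 ph') P2 P2' u2_gt0 u2'_gt0.
have T3 := cellsum_grad_term_tangent P3 P3' u3_gt0 u3'_gt0.
have S : cellsum (fun i j => Sfun p (ph'.1 i j) (ph'.2 i j))
         - cellsum (fun i j => Sfun p (ph.1 i j) (ph.2 i j))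
    <= cellsum (fun i j => dSa p (ph'.1 i j) (ph'.2 i j) * (ph'.1 i j - ph.1 i j)
                          + dSb p (ph'.1 i j) (ph'.2 i j) * (ph'.2 i j - ph.2 i j)).
  rewrite -cellsumB; apply: ler_cellsum => i j.
  case: G G' => _ [_ /(_ i j) [? [? ?]]] [_ [_ /(_ i j) [? [? ?]]]].
  exact: Sfun_tangent.
rewrite cellsum_dGM !GhE.
have h2 := sqr_ge0 h.
have := ler_wpM2l h2 S; have := ler_wpM2l h2 (ler_wpM2l (sqr_ge0 (eps1 p)) T1).
have := ler_wpM2l h2 (ler_wpM2l (sqr_ge0 (eps2 p)) T2).
have := ler_wpM2l h2 (ler_wpM2l (sqr_ge0 (eps3 p)) T3).
lra.
Qed.

Lemma cellsum_Hfun_extrapolation_bound (pm pn pp : pair R) :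
  0 <= chi12 p -> 0 <= chi13 p -> 0 <= chi23 p ->
  cellsum (fun i j => Hfun p (pp.1 i j) (pp.2 i j))
  - cellsum (fun i j => Hfun p (pn.1 i j) (pn.2 i j))
  - (cellsum (fun i j => dHa p (2 * pn.1 i j - pm.1 i j) (2 * pn.2 i j - pm.2 i j)
                         * (pp.1 i j - pn.1 i j))
     + cellsum (fun i j => dHb p (2 * pn.1 i j - pm.1 i j) (2 * pn.2 i j - pm.2 i j)
                           * (pp.2 i j - pn.2 i j)))
  + (2 * chi12 p + 3 * chi13 p + chi23 p) / 2 *
      (cellsum (fun i j => (pp.1 i j - pn.1 i j) ^+ 2)
       - cellsum (fun i j => (pn.1 i j - pm.1 i j) ^+ 2))
  + (2 * chi12 p + chi13 p + 3 * chi23 p) / 2 *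
      (cellsum (fun i j => (pp.2 i j - pn.2 i j) ^+ 2)
       - cellsum (fun i j => (pn.2 i j - pm.2 i j) ^+ 2))
  <= (3 * chi13 p + 3 * chi23 p + 2 * chi12 p) *
       (cellsum (fun i j => (pp.1 i j - pn.1 i j) ^+ 2)
        + cellsum (fun i j => (pp.2 i j - pn.2 i j) ^+ 2)).
Proof.
move=> c12 c13 c23.
rewrite -!cellsumB -!cellsumD -!cellsumB -!cellsumZ -!cellsumD; apply: ler_cellsum => i j.
have := Hfun_extrapolation_bound (pn.1 i j) (pn.2 i j) (pp.1 i j - pn.1 i j)
  (pp.2 i j - pn.2 i j) (pn.1 i j - pm.1 i j) (pn.2 i j - pm.2 i j) c12 c13 c23.
have extrapolate a a0 : a + (a - a0) = 2 * a - a0 :> R by ring.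
by rewrite !subrKC !extrapolate.
Qed.

Lemma Gh_bdf2_bound (pm pn pp : pair R) :
  0 <= chi12 p -> 0 <= chi13 p -> 0 <= chi23 p -> in_gibbs N pn -> in_gibbs N pp ->
  Gh N h p pp - Gh N h p pn
  + (2 * chi12 p + 3 * chi13 p + chi23 p) / 2 *
      (norm2 N h (fun i j => pp.1 i j - pn.1 i j) ^+ 2
       - norm2 N h (fun i j => pn.1 i j - pm.1 i j) ^+ 2)
  + (2 * chi12 p + chi13 p + 3 * chi23 p) / 2 *
      (norm2 N h (fun i j => pp.2 i j - pn.2 i j) ^+ 2
       - norm2 N h (fun i j => pn.2 i j - pm.2 i j) ^+ 2)
  <= inner N h (fun i j => dG1 h p pp i j
                 + dHa p (2 * pn.1 i j - pm.1 i j) (2 * pn.2 i j - pm.2 i j))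
               (fun i j => pp.1 i j - pn.1 i j)
   + inner N h (fun i j => dG2 h p pp i j
                 + dHb p (2 * pn.1 i j - pm.1 i j) (2 * pn.2 i j - pm.2 i j))
               (fun i j => pp.2 i j - pn.2 i j)
   + (3 * chi13 p + 3 * chi23 p + 2 * chi12 p) *
       (norm2 N h (fun i j => pp.1 i j - pn.1 i j) ^+ 2
        + norm2 N h (fun i j => pp.2 i j - pn.2 i j) ^+ 2).
Proof.
move=> c12 c13 c23 Gn Gp; have := Gh_tangent Gn Gp.
have := ler_wpM2l (sqr_ge0 h) (cellsum_Hfun_extrapolation_bound pm pn pp c12 c13 c23).
rewrite (innerDl N h (dG1 h p pp)) (innerDl N h (dG2 h p pp)) !innerE !norm2E; lra.
Qed.

End GibbsEnergy.

Unset Implicit Arguments.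
Theorem theorem4p1 (R : realType) (L : R) (N : nat) (h : R) (p : model R)
    (Mob1 Mob2 dt A1 A2 : R) (pm pn pp : pair R) :
  0 < L -> (0 < N)%N -> h = L / N%:R ->
  0 < M0 p -> 0 < N0 p ->
  0 < eps1 p -> 0 < eps2 p -> 0 < eps3 p ->
  0 < chi12 p -> 0 < chi13 p -> 0 < chi23 p ->
  0 < 4 * chi13 p * chi23 p - (chi12 p - chi13 p - chi23 p) ^+ 2 ->
  0 < Mob1 -> 0 < Mob2 -> 0 < dt ->
  Mob1 * (3 * chi13 p + 3 * chi23 p + 2 * chi12 p) ^+ 2 / 4 <= A1 ->
  Mob2 * (3 * chi13 p + 3 * chi23 p + 2 * chi12 p) ^+ 2 / 4 <= A2 ->
  in_gibbs N pm -> in_gibbs N pn -> in_gibbs N pp ->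
  mean N h L pm.1 = mean N h L pn.1 -> mean N h L pn.1 = mean N h L pp.1 ->
  mean N h L pm.2 = mean N h L pn.2 -> mean N h L pn.2 = mean N h L pp.2 ->
  bdf2_step h p Mob1 Mob2 dt A1 A2 pm pn pp ->
  Eh N h L p Mob1 Mob2 dt pp pn <= Eh N h L p Mob1 Mob2 dt pn pm.
Proof.
move=> L_gt0; case: N => [//|n] _ hE M0_gt0 N0_gt0 _ _ _ c12 c13 c23 _
  M1_gt0 M2_gt0 dt_gt0 A1_ge A2_ge Gm Gn Gp m1 m1' m2 m2' step.
have h_gt0 : 0 < h by rewrite hE divr_gt0 ?ltr0n.
have K_gt0 : 0 < 3 * chi13 p + 3 * chi23 p + 2 * chi12 p by lra.
have [Pm1 Pm2] := in_gibbs_shift_periodic Gm.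
have [Pn1 Pn2] := in_gibbs_shift_periodic Gn.
have [Pp1 Pp2] := in_gibbs_shift_periodic Gp.
have [PG1 PG2] := shift_periodic_dG h p Pp1 Pp2.
have mean_eq := eq_mean_cellsum h_gt0 L_gt0.
have D1 := bdf2_dissipation L h_gt0
  (nu := fun i j => dG1 h p pp i j + dHa p (2 * pn.1 i j - pm.1 i j) (2 * pn.2 i j - pm.2 i j))
  M1_gt0 dt_gt0 K_gt0 A1_ge Pm1 Pn1 Pp1 ltac:(by periodicity)
  (mean_eq _ _ _ m1) (mean_eq _ _ _ m1') (fun i j => proj1 (step i j)).
have D2 := bdf2_dissipation L h_gt0
  (nu := fun i j => dG2 h p pp i j + dHb p (2 * pn.1 i j - pm.1 i j) (2 * pn.2 i j - pm.2 i j))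
  M2_gt0 dt_gt0 K_gt0 A2_ge Pm2 Pn2 Pp2 ltac:(by periodicity)
  (mean_eq _ _ _ m2) (mean_eq _ _ _ m2') (fun i j => proj2 (step i j)).
have := Gh_bdf2_bound h M0_gt0 N0_gt0 pm (ltW c12) (ltW c13) (ltW c23) Gn Gp.
rewrite /Eh; lra.
Qed.
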